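(* Let $X=(X_1,\ldots,X_p)^\top$ follow the linear structural equation model $$X_j = \Psi_j + \sum_{k \in \mathrm{PA}(j)} \theta_{j,k} X_k, \qquad j=1,\ldots,p,$$ as described in the context. Fix $j$, a function $f:\mathbb{R}\to\mathbb{R}$, and assume $\beta^{f,j} := E(XX^\top)^{-1}E\{Xf(X_j)\}$ exists. Let $k\in\mathrm{AN}(j)$ with $\mathrm{CH}^{\to j}(k)=\{l\}$. If $\Psi_l$ has the same distribution as $\theta_{l,k}\Psi_k$, then $\beta^{f,j}_k=0$.
   Context: In the model, $\Psi_1,\ldots,\Psi_p$ are independent, centered random variables with $0<\mathrm{var}(\Psi_j)=\sigma_j^2<\infty$ for all $j$, so that the covariance matrix of $X$ exists and has full rank. The parent sets $\mathrm{PA}(j)$ are those of a directed acyclic graph (DAG) on $\{1,\ldots,p\}$ with edges $k\to j$ for $k\in\mathrm{PA}(j)$, and $\theta_{j,k}$ are real coefficients. $\mathrm{AN}(j)$ and $\mathrm{CH}(k)$ denote the ancestors of $j$ and the children of $k$ in this DAG, and $\mathrm{CH}^{\to j}(k) := \mathrm{CH}(k)\cap(\mathrm{AN}(j)\cup\{j\})$. *)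

From HB Require Import structures.
From mathcomp Require Import all_boot all_order all_algebra.
From mathcomp Require Import all_classical all_reals all_analysis.
Set Implicit Arguments. Unset Strict Implicit. Unset Printing Implicit Defensive.
Import Order.TTheory GRing.Theory Num.Theory.
Local Open Scope classical_set_scope.
Local Open Scope ring_scope.

(* Mutual independence of a finite family of real random variables:
   product rule for all choices of measurable sets (taking A i = setT
   covers every sub-family). *)
Definition mutually_independent d (T : measurableType d) (R : realType)
  (P : probability T R) (p : nat) (Psi : 'I_p -> T -> R) : Prop :=
  forall A : 'I_p -> set R, (forall i, measurable (A i)) ->
    P (\bigcap_(i in [set: 'I_p]) (Psi i @^-1` A i)) =
    (\big[*%E/1%E]_(i < p) P (Psi i @^-1` A i))%E.

Definition same_law d (T : measurableType d) (R : realType)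
  (P : probability T R) (U V : T -> R) : Prop :=
  forall A : set R, measurable A -> P (U @^-1` A) = P (V @^-1` A).

(* DAG on 'I_p given by an edge relation E (E k j means k -> j, i.e.
   k \in PA(j)); acyclic: no edge k -> j with a directed path j ~> k. *)
Definition acyclic (p : nat) (E : rel 'I_p) : Prop :=
  forall k j, E k j -> ~~ connect E j k.

Definition ancestor (p : nat) (E : rel 'I_p) (k j : 'I_p) : bool :=
  (k != j) && connect E k j.

Definition CHto (p : nat) (E : rel 'I_p) (j k : 'I_p) : {set 'I_p} :=
  [set l | E k l && (ancestor E l j || (l == j))].

Definition secmom d (T : measurableType d) (R : realType)
  (P : probability T R) (p : nat) (X : 'I_p -> T -> R) : 'M[R]_p :=
  \matrix_(i < p, k < p) fine ('E_P[fun w => (X i w * X k w)%R])%E.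

Definition beta_fj d (T : measurableType d) (R : realType)
  (P : probability T R) (p : nat) (X : 'I_p -> T -> R) (f : R -> R)
  (j : 'I_p) : 'cV[R]_p :=
  invmx (secmom P X) *m \col_(i < p) fine ('E_P[fun w => (X i w * f (X j w))%R])%E.

From HB Require Import structures.
From mathcomp Require Import all_boot all_order all_algebra.
From mathcomp Require Import all_classical all_reals all_analysis.
From mathcomp Require Import measurable_realfun.
From mathcomp Require Import ring.
Set Implicit Arguments. Unset Strict Implicit. Unset Printing Implicit Defensive.
Import Order.TTheory GRing.Theory Num.Theory.
Local Open Scope classical_set_scope.
Local Open Scope ring_scope.

(* Writing the model as X = A Psi with A = (I - B)^-1, the second moment matrix
   of X is A D A^T with D = diag(var Psi), hence beta^{f,j} = (I - B)^T D^-1 g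
   with g_a = E[Psi_a f(X_j)], and beta^{f,j}_k = g_k / var Psi_k minus the sum
   of theta_{a,k} g_a / var Psi_a over the children a of k.  A child a <> l is
   neither j nor an ancestor of j, so X_j does not involve Psi_a and g_a = 0 by
   independence.  Every path from k to j passes through l, so
   A_{j,k} = A_{j,l} theta_{l,k} and X_j depends on (Psi_k, Psi_l) only through
   Psi_l + theta_{l,k} Psi_k.  Exchanging Psi_l with the equally distributed
   theta_{l,k} Psi_k then gives g_l = theta_{l,k} g_k, while
   var Psi_l = theta_{l,k}^2 var Psi_k, and the two remaining terms cancel. *)

Section sem_matrix.
Variables (R : fieldType) (p : nat) (E : rel 'I_p) (theta : 'I_p -> 'I_p -> R).
Hypothesis acyclicE : acyclic E.

Definition sem_coef : 'M[R]_p := \matrix_(a, m) (if E m a then theta a m else 0).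
Definition sem_mx : 'M[R]_p := 1%:M - sem_coef.
Definition sem_inv : 'M[R]_p := invmx sem_mx.

Lemma card_connect_edge_lt m a : E m a -> (#|connect E a| < #|connect E m|)%N.
Proof.
move=> Ema; apply: proper_card; apply/properP; split.
- by apply/fintype.subsetP => x; apply: connect_trans (connect1 Ema).
- by exists m; rewrite inE ?connect0 //; exact: acyclicE.
Qed.

Lemma row_mul_sem_mx (r : 'rV[R]_p) m :
  (r *m sem_mx) 0 m = r 0 m - \sum_a r 0 a * sem_coef a m.
Proof. by rewrite mulmxBr mxE mul_mx_scalar scale1r !mxE. Qed.

(* Induction on the number of descendants, which decreases along edges. *)
Lemma sem_mx_row_eq0 (Q : pred 'I_p) (r : 'rV[R]_p) :
    (forall m a, Q m -> E m a -> Q a) ->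
    (forall m, Q m -> (r *m sem_mx) 0 m = 0) ->
  forall m, Q m -> r 0 m = 0.
Proof.
move=> closedQ rQ m.
elim: #|connect E m|.+1 {-2}m (ltnSn #|connect E m|) => // n IHn {}m.
rewrite ltnS => le_mn Qm; have := rQ m Qm.
rewrite row_mul_sem_mx big1 ?subr0 // => a _; rewrite mxE.
case: ifP => Ema; last by rewrite mulr0.
rewrite IHn ?mul0r ?(closedQ m a Qm Ema) //.
exact: leq_trans (card_connect_edge_lt Ema) le_mn.
Qed.

Lemma sem_mx_unit : sem_mx \in unitmx.
Proof.
rewrite -row_free_unit -kermx_eq0; apply/eqP/row_matrixP => i.
apply/rowP => m; rewrite row0 [RHS]mxE.
apply: (@sem_mx_row_eq0 predT) => // m' _.
by have /sub_kermxP -> := row_sub i (kermx sem_mx); rewrite mxE.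
Qed.

Lemma mul_sem_inv_mx : sem_inv *m sem_mx = 1%:M.
Proof. exact: mulVmx sem_mx_unit. Qed.

Lemma mul_sem_mx_inv : sem_mx *m sem_inv = 1%:M.
Proof. exact: mulmxV sem_mx_unit. Qed.

Lemma sem_inv_eq0 j m : ~~ connect E m j -> sem_inv j m = 0.
Proof.
move=> not_mj; have -> : sem_inv j m = row j sem_inv 0 m by rewrite mxE.
apply: (@sem_mx_row_eq0 (fun x => ~~ connect E x j)) => // [x a + Exa|x not_xj].
  by apply: contra; apply: connect_trans (connect1 Exa).
rewrite -row_mul mul_sem_inv_mx !mxE.
by case: eqP not_xj => // ->; rewrite connect0.
Qed.

Lemma sem_inv_single_child j k l :
    k != j -> E k l -> (forall a, E k a -> a != l -> ~~ connect E a j) ->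
  sem_inv j k = sem_inv j l * theta l k.
Proof.
move=> kj Ekl others.
have : (row j sem_inv *m sem_mx) 0 k = 0.
  by rewrite -row_mul mul_sem_inv_mx !mxE eq_sym (negbTE kj).
rewrite row_mul_sem_mx mxE => /eqP; rewrite subr_eq0 => /eqP ->.
rewrite (bigD1 l) //= big1 ?addr0 => [|a al]; first by rewrite !mxE Ekl.
rewrite !mxE; case: ifP => Eka; last by rewrite mulr0.
by rewrite sem_inv_eq0 ?mul0r ?others.
Qed.

Lemma sem_mx_mul (x psi : 'cV[R]_p) :
    (forall i, x i 0 = psi i 0 + \sum_(m < p | E m i) theta i m * x m 0) ->
  sem_mx *m x = psi.
Proof.
move=> hx; apply/colP => i.
rewrite mulmxBl mul_scalar_mx scale1r !mxE hx.
have -> : \sum_m sem_coef i m * x m 0 = \sum_(m | E m i) theta i m * x m 0.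
  rewrite [RHS]big_mkcond; apply: eq_bigr => m _; rewrite !mxE.
  by case: ifP => _; rewrite ?mul0r.
by rewrite addrK.
Qed.

Lemma sem_inv_mul (x psi : 'cV[R]_p) :
    (forall i, x i 0 = psi i 0 + \sum_(m < p | E m i) theta i m * x m 0) ->
  x = sem_inv *m psi.
Proof. by move/sem_mx_mul <-; rewrite mulmxA mul_sem_inv_mx mul1mx. Qed.

Lemma sem_beta (s : 'rV[R]_p) (gam : 'cV[R]_p) : (forall a, s 0 a != 0) ->
  invmx (sem_inv *m diag_mx s *m sem_inv^T) *m (sem_inv *m gam) =
  sem_mx^T *m diag_mx (\row_a (s 0 a)^-1) *m gam.
Proof.
move=> s_neq0; set Di := diag_mx (\row_a _); set S := _ *m sem_inv^T.
have DiD : Di *m diag_mx s = 1%:M.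
  apply/matrixP => a b; rewrite mul_diag_mx !mxE.
  by case: eqP => [->|_]; rewrite ?mulVf ?mulr0.
have MS : sem_mx^T *m Di *m sem_mx *m S = 1%:M.
  rewrite /S !mulmxA -[_ *m sem_mx *m sem_inv]mulmxA mul_sem_mx_inv mulmx1.
  by rewrite -[_ *m Di *m _]mulmxA DiD mulmx1 -trmx_mul mul_sem_inv_mx trmx1.
have [_ S_unit] := mulmx1_unit MS.
have -> : invmx S = sem_mx^T *m Di *m sem_mx.
  by rewrite -[RHS]mulmx1 -(mulmxV S_unit) mulmxA MS mul1mx.
by rewrite !mulmxA -[_ *m sem_mx *m sem_inv]mulmxA mul_sem_mx_inv mulmx1.
Qed.

Lemma sem_mx_beta_coord (s : 'rV[R]_p) (gam : 'cV[R]_p) k :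
  (sem_mx^T *m diag_mx (\row_a (s 0 a)^-1) *m gam) k 0 =
  gam k 0 / s 0 k - \sum_(a | E k a) theta a k * gam a 0 / s 0 a.
Proof.
have Ekk : E k k = false by apply/negP => /acyclicE; rewrite connect0.
rewrite -mulmxA mxE (eq_bigr (fun a => (a == k)%:R * (gam a 0 / s 0 a) -
    (if E k a then theta a k * gam a 0 / s 0 a else 0))) => [|a _]; last first.
  by rewrite mul_diag_mx !mxE eq_sym; case: ifP => _; ring.
rewrite sumrB -big_mkcond /= (bigD1 k) //= eqxx mul1r big1 ?addr0 // => a.
by move=> /negbTE ->; rewrite mul0r.
Qed.

End sem_matrix.

Section independence.
Local Open Scope ereal_scope.
Context d (T : measurableType d) (R : realType) (P : probability T R).

Definition indep2 d1 d2 (T1 : measurableType d1) (T2 : measurableType d2)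
    (U : T -> T1) (V : T -> T2) :=
  forall A B, measurable A -> measurable B ->
    P (U @^-1` A `&` V @^-1` B) = P (U @^-1` A) * P (V @^-1` B).

Definition eq_law d1 (T1 : measurableType d1) (U V : T -> T1) :=
  forall A, measurable A -> P (U @^-1` A) = P (V @^-1` A).

Definition mfun_of d1 (T1 : measurableType d1) (U : T -> T1)
    (mU : measurable_fun setT U) : {mfun T >-> T1} :=
  HB.pack U (isMeasurableFun.Build _ _ _ _ U mU).

Lemma indep2_compl d1 d2 d3 (T1 : measurableType d1) (T2 : measurableType d2)
    (T3 : measurableType d3) (g : T1 -> T3) (U : T -> T1) (V : T -> T2) :
  measurable_fun setT g -> indep2 U V -> indep2 (g \o U) V.
Proof.
move=> mg UV A B mA mB; apply: (UV (g @^-1` A) B _ mB).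
by rewrite -[X in measurable X]setTI; exact: mg.
Qed.

Section pair.
Context d1 d2 (T1 : measurableType d1) (T2 : measurableType d2).

Lemma law_pair_indep (U : T -> T1) (V : T -> T2)
    (mU : measurable_fun setT U) (mV : measurable_fun setT V) :
    indep2 U V -> forall A, measurable A ->
  P ((fun w => (U w, V w)) @^-1` A) =
  (distribution P (mfun_of mU) \x distribution P (mfun_of mV)) A.
Proof.
move=> UV A mA; have mUV := measurable_fun_pair mU mV.
rewrite -[LHS]/(distribution P (mfun_of mUV) A).
by apply/esym/product_measure_unique => // B C mB mC; exact: UV.
Qed.

Lemma eq_law_pair (U U' : T -> T1) (V V' : T -> T2) :
    measurable_fun setT U -> measurable_fun setT U' ->
    measurable_fun setT V -> measurable_fun setT V' ->
    indep2 U V -> indep2 U' V' -> eq_law U U' -> eq_law V V' ->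
  eq_law (fun w => (U w, V w)) (fun w => (U' w, V' w)).
Proof.
move=> mU mU' mV mV' UV UV' UU' VV' A mA.
rewrite (law_pair_indep mU mV UV) // (law_pair_indep mU' mV' UV') //.
apply: product_measure_unique => // B C mB mC.
rewrite [LHS]product_measure1E //.
by congr (_ * _); [exact/esym/UU'|exact/esym/VV'].
Qed.

Lemma expectation_eq_law (U U' : T -> T1) (h : T1 -> R) :
    measurable_fun setT U -> measurable_fun setT U' -> eq_law U U' ->
    measurable_fun setT h -> (h \o U) \in Lfun P 1 -> (h \o U') \in Lfun P 1 ->
  'E_P[h \o U] = 'E_P[h \o U'].
Proof.
move=> mU mU' UU' mh /Lfun1_integrable hU /Lfun1_integrable hU'.
have mEh : measurable_fun setT (EFin \o h) by exact/measurable_EFinP.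
rewrite unlock.
transitivity (\int[distribution P (mfun_of mU)]_y (h y)%:E).
  by rewrite integral_distribution.
transitivity (\int[distribution P (mfun_of mU')]_y (h y)%:E).
  by apply: eq_measure_integral => A mA _; exact: UU'.
by rewrite integral_distribution.
Qed.

End pair.

Lemma expectation_mul_indep_centered (U V : T -> R) :
    measurable_fun setT U -> measurable_fun setT V -> indep2 U V ->
    U \in Lfun P 1 -> 'E_P[U] = 0 -> (U \* V)%R \in Lfun P 1 ->
  'E_P[U \* V]%R = 0.
Proof.
move=> mU mV UV /Lfun1_integrable iU EU0 /Lfun1_integrable iUV.
pose mu := distribution P (mfun_of mU); pose nu := distribution P (mfun_of mV).
have mUV := measurable_fun_pair mU mV.
pose F (z : R * R) := (z.1 * z.2)%:E.
have mF : measurable_fun setT F.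
  by apply/measurable_EFinP; apply: measurable_funM.
have lawE A : measurable A -> distribution P (mfun_of mUV) A = (mu \x nu) A.
  exact: law_pair_indep.
have EUV : 'E_P[U \* V]%R = \int[mu \x nu]_z F z.
  rewrite unlock; transitivity (\int[distribution P (mfun_of mUV)]_z F z).
    by rewrite integral_distribution.
  by apply: eq_measure_integral => A mA _; exact: lawE.
have iF : (mu \x nu).-integrable setT F.
  apply/integrableP; split => //.
  rewrite -(eq_measure_integral _ (fun A mA _ => lawE A mA)).
  by case/integrableP : (integrable_pushforward mUV mF iUV measurableT).
rewrite EUV -integral21_prod_meas1 // (eq_integral (fun _ => 0)) ?integral0 // => y _.
rewrite /fubini_G /F /=; under eq_integral do rewrite EFinM.
rewrite integralZr //; last exact: integrable_pushforward.
have -> : (\int[mu]_x x%:E) = 'E_P[U].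
  by rewrite unlock integral_distribution //; exact: measurable_EFinP.
by rewrite EU0 mul0e.
Qed.

End independence.

Section coordinates.
Context d (T : measurableType d) (R : realType) (P : probability T R)
  (p : nat) (Psi : 'I_p -> T -> R).
Hypothesis indepPsi : mutually_independent P Psi.
Hypothesis mPsi : forall i, measurable_fun setT (Psi i).

(* [<<s coord_rect S >>] is the sigma-algebra generated by the [Psi i], [i \in S]. *)
Definition coord_rect (S : pred 'I_p) : set (set T) :=
  [set F | exists C : 'I_p -> set R, (forall i, measurable (C i)) /\
     (forall i, ~~ S i -> C i = setT) /\
     F = \bigcap_(i in [set: 'I_p]) Psi i @^-1` C i].

Local Notation sigma_coord S := (g_sigma_algebraType (coord_rect S)).

Lemma coord_rect_measurable S F : coord_rect S F -> measurable F.
Proof.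
move=> [C [mC [_ ->]]]; apply: fin_bigcap_measurable => [|i _].
  exact: finite_finset.
by rewrite -[X in measurable X]setTI; exact: mPsi.
Qed.

Lemma sigma_coord_measurable S F : <<s coord_rect S >> F -> measurable F.
Proof.
move=> SF; apply: (smallest_sub _ _ SF) => // [|G]; last exact: coord_rect_measurable.
exact: sigma_algebra_measurable.
Qed.

Lemma measurable_fun_sigma_coord S d' (U : measurableType d') (Y : T -> U) :
  measurable_fun setT (Y : sigma_coord S -> U) -> measurable_fun setT Y.
Proof.
move=> mY _ B mB; rewrite setTI; apply: (@sigma_coord_measurable S).
by have := mY measurableT B mB; rewrite setTI.
Qed.

Lemma coord_rect_setI S : setI_closed (coord_rect S).
Proof.
move=> _ _ [C [mC [C_T ->]]] [C' [mC' [C'_T ->]]].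
exists (fun i => C i `&` C' i); split; first by move=> i; exact: measurableI.
split; first by move=> i Si; rewrite C_T // C'_T // setIT.
by rewrite -bigcapI.
Qed.

Lemma coord_rect_preimage (S : pred 'I_p) i (A : set R) : S i -> measurable A ->
  coord_rect S (Psi i @^-1` A).
Proof.
move=> Si mA; exists (fun m => if m == i then A else setT); split.
  by move=> m; case: eqP.
split; first by move=> m; case: eqP => // ->; rewrite Si.
apply/seteqP; split => w /= => [Aw m _|/(_ i I)]; last by rewrite eqxx.
by case: eqP => // ->.
Qed.

Lemma measurable_coord_sigma (S : pred 'I_p) i : S i ->
  measurable_fun setT (Psi i : sigma_coord S -> R).
Proof.
move=> Si _ B mB; rewrite setTI; apply: sub_sigma_algebra.
exact: coord_rect_preimage.
Qed.

Lemma measurable_lincomb_sigma (S : pred 'I_p) (c : 'I_p -> R) :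
  (forall m, ~~ S m -> c m = 0%R) ->
  measurable_fun setT ((fun w => \sum_m c m * Psi m w)%R : sigma_coord S -> R).
Proof.
move=> c_eq0; apply: (eq_measurable_fun (fun w : sigma_coord S =>
    \sum_(m <- index_enum 'I_p) (if S m then c m * Psi m w else 0))%R).
  move=> w _; apply: eq_bigr => m _.
  by case: ifP => Sm //; rewrite c_eq0 ?Sm ?mul0r.
apply: measurable_sum => m; case Sm: (S m); last exact: measurable_cst.
by apply: measurable_funM; [exact: measurable_cst|exact: measurable_coord_sigma].
Qed.

Local Open Scope ereal_scope.

Lemma coord_rect_indep S1 S2 F G : (forall i, ~~ (S1 i && S2 i)) ->
  coord_rect S1 F -> coord_rect S2 G -> P (F `&` G) = P F * P G.
Proof.
move=> S12 [C [mC [C_T ->]]] [C' [mC' [C'_T ->]]].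
rewrite -bigcapI -[\bigcap_(i in _) _]/(\bigcap_(i in setT) Psi i @^-1` (C i `&` C' i)).
rewrite !indepPsi // => [|i]; last exact: measurableI.
rewrite -big_split /=; apply: eq_bigr => i _.
have [S1i|S1i] := boolP (S1 i).
- have /C'_T -> : ~~ S2 i by move: (S12 i); rewrite S1i.
  by rewrite setIT preimage_setT probability_setT mule1.
- by rewrite C_T // setTI preimage_setT probability_setT mul1e.
Qed.

(* Dynkin's pi-lambda theorem lifts the product rule from rectangles to the
   generated sigma-algebra. *)
Lemma coord_rect_sigma_indep S1 S2 F G : (forall i, ~~ (S1 i && S2 i)) ->
  coord_rect S1 F -> <<s coord_rect S2 >> G -> P (F `&` G) = P F * P G.
Proof.
move=> S12 rF; have mF := coord_rect_measurable rF.
apply: (@dynkin_induction _ (sigma_coord S2) (coord_rect S2)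
  (fun G => P (F `&` G) = P F * P G) erefl (@coord_rect_setI S2)).
- by rewrite setIT probability_setT mule1.
- by move=> G' rG'; exact: coord_rect_indep rF rG'.
- move=> A mA FA; have mA' := sigma_coord_measurable mA.
  rewrite -setDE measureD // ?probability_setC //; last first.
    by rewrite (le_lt_trans (probability_le1 _ _)) ?ltry.
  by rewrite muleBr ?mule1 ?fin_num_measure // -FA.
- move=> A mA tA FA; have mA' n := sigma_coord_measurable (mA n).
  rewrite setI_bigcupr !measure_bigcup //= => [|i _|]; last first.
  + apply/trivIsetP => i j _ _ ij; move/trivIsetP : tA => /(_ i j I I ij).
    by rewrite setIACA setIid => ->; rewrite setI0.
  + exact: measurableI.
  rewrite -[P F]fineK ?fin_num_measure // -nneseriesZl //.
  by apply: eq_eseriesr => n _; rewrite fineK ?fin_num_measure // FA.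
Qed.

Lemma indep2_coord i d' (U : measurableType d') (Y : T -> U) :
  measurable_fun setT (Y : sigma_coord (predC1 i) -> U) -> indep2 P (Psi i) Y.
Proof.
move=> mY A B mA mB; apply: (@coord_rect_sigma_indep (pred1 i) (predC1 i)).
- by move=> m /=; rewrite andbN.
- by apply: coord_rect_preimage => /=.
- by have := mY measurableT B mB; rewrite setTI.
Qed.

End coordinates.

Section moments.
Local Open Scope ereal_scope.
Context d (T : measurableType d) (R : realType) (P : probability T R).

Lemma Lfun_measurable r (U : T -> R) : U \in Lfun P r -> measurable_fun setT U.
Proof. by case/andP; rewrite inE. Qed.

Lemma Lfun_lincomb (r : \bar R) I (s : seq I) (c : I -> R) (G : I -> T -> R) :
    1 <= r -> (forall i, G i \in Lfun P r) ->
  (fun w => \sum_(i <- s) c i * G i w)%R \in Lfun P r.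
Proof.
move=> r1 Gr; rewrite [X in X \in _](_ : _ = \sum_(i <- s) c i *: G i)%R.
  by rewrite rpred_sum // => i _; rewrite rpredZ.
by rewrite fct_sumE.
Qed.

Lemma expectation_lincomb I (s : seq I) (c : I -> R) (G : I -> T -> R) :
    (forall i, G i \in Lfun P 1) ->
  'E_P[fun w => \sum_(i <- s) c i * G i w]%R =
  (\sum_(i <- s) c i * fine 'E_P[G i])%:E.
Proof.
move=> G1; elim: s => [|i s IHs].
  by under eq_fun do rewrite big_nil; rewrite big_nil expectation_cst.
under eq_fun do rewrite big_cons; rewrite big_cons EFinD -IHs.
have -> : (fun w => c i * G i w + \sum_(i <- s) c i * G i w)%R =
    ((c i \o* G i) \+ (fun w => \sum_(i <- s) c i * G i w))%R.
  by apply/funext => w /=; rewrite mulrC.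
rewrite expectationD ?Lfun_lincomb //; last by rewrite -mul_funC rpredZ.
by rewrite expectationZl // EFinM fineK ?expectation_fin_num.
Qed.

Lemma Lfun_mulrl (r : \bar R) (a : R) (U : T -> R) :
  1 <= r -> U \in Lfun P r -> (fun w => a * U w)%R \in Lfun P r.
Proof. by move=> r1 Ur; rewrite (_ : (fun w => _) = a *: U)%R ?rpredZ. Qed.

Lemma fine_expectation_mulrl (a : R) (U : T -> R) : U \in Lfun P 1 ->
  fine 'E_P[fun w => a * U w]%R = (a * fine 'E_P[U])%R.
Proof.
move=> U1; rewrite (_ : (fun w => _) = a \o* U)%R; last first.
  by apply/funext => w /=; rewrite mulrC.
by rewrite expectationZl // fineM // expectation_fin_num.
Qed.

Lemma fine_variance_centered (U : T -> R) :
    U \in Lfun P 2%:E -> 'E_P[U] = 0 ->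
  fine 'V_P[U] = fine 'E_P[fun w => U w * U w]%R.
Proof.
move=> U2 U0; rewrite varianceE // U0 expe2 mul0e sube0.
by congr (fine 'E_P[_]); apply/funext => w; rewrite /= expr2.
Qed.

Lemma fine_variance_same_law_scale (a : R) (U V : T -> R) :
    U \in Lfun P 2%:E -> V \in Lfun P 2%:E -> 'E_P[U] = 0 -> 'E_P[V] = 0 ->
    same_law P U (fun w => a * V w)%R ->
  fine 'V_P[U] = (a ^+ 2 * fine 'V_P[V])%R.
Proof.
move=> U2 V2 U0 V0 UaV; have VV1 := Lfun2_mul_Lfun1 V2 V2.
have aV2 : (fun w => a * V w)%R \in Lfun P 2%:E by rewrite Lfun_mulrl ?lee1n.
rewrite !fine_variance_centered //.
have -> : 'E_P[fun w => U w * U w]%R = 'E_P[fun w => a * (a * (V w * V w))]%R.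
  rewrite [in RHS](_ : (fun w => _) = (fun x => x * x) \o (fun w => a * V w))%R.
    apply: expectation_eq_law UaV _ _ _ => //.
    - exact: Lfun_measurable U2.
    - exact: Lfun_measurable aV2.
    - by apply: measurable_funM.
    - exact: Lfun2_mul_Lfun1.
    - exact: Lfun2_mul_Lfun1.
  by apply/funext => w /=; rewrite mulrACA mulrA.
by rewrite !fine_expectation_mulrl ?Lfun_mulrl // mulrA expr2.
Qed.

Section lincomb.
Context (p : nat) (Psi : 'I_p -> T -> R).

Lemma fine_expectation_mul_lincomb (c : 'I_p -> R) (Y : T -> R) :
    (forall m, (fun w => Psi m w * Y w)%R \in Lfun P 1) ->
  fine 'E_P[fun w => (\sum_m c m * Psi m w) * Y w]%R =
  (\sum_m c m * fine 'E_P[fun w => Psi m w * Y w])%R.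
Proof.
move=> PY; rewrite (_ : (fun w => _) = fun w => \sum_m c m * (Psi m w * Y w))%R.
  by rewrite expectation_lincomb.
by apply/funext => w; rewrite mulr_suml; apply: eq_bigr => m _; rewrite mulrA.
Qed.

Lemma cross_moment_lincomb (A : 'M[R]_p) (X : 'I_p -> T -> R) (Y : T -> R) :
    (forall i w, X i w = \sum_m A i m * Psi m w)%R ->
    (forall m, (fun w => Psi m w * Y w)%R \in Lfun P 1) ->
  \col_i fine 'E_P[fun w => X i w * Y w]%R =
  (A *m \col_m fine 'E_P[fun w => Psi m w * Y w])%R.
Proof.
move=> XA PY; apply/colP => i; rewrite !mxE.
under eq_fun do rewrite XA; rewrite fine_expectation_mul_lincomb //.
by apply: eq_bigr => m _; rewrite mxE.
Qed.

Lemma secmom_lincomb (A : 'M[R]_p) (X : 'I_p -> T -> R) :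
    (forall i, Psi i \in Lfun P 2%:E) ->
    (forall i w, X i w = \sum_m A i m * Psi m w)%R ->
  secmom P X = (A *m secmom P Psi *m A^T)%R.
Proof.
move=> Psi2 XA; have X2 i : X i \in Lfun P 2%:E.
  by rewrite (funext (XA i)) Lfun_lincomb // lee_fin ler1n.
apply/matrixP => i k; rewrite -mulmxA !mxE.
under eq_fun do rewrite [X i _]XA.
rewrite fine_expectation_mul_lincomb => [|m]; last exact: Lfun2_mul_Lfun1.
apply: eq_bigr => a _; rewrite !mxE; congr (_ * _)%R.
under eq_fun do rewrite mulrC XA.
rewrite fine_expectation_mul_lincomb => [|m]; last exact: Lfun2_mul_Lfun1.
apply: eq_bigr => b _; rewrite !mxE mulrC.
by under eq_fun do rewrite mulrC.
Qed.

Lemma secmom_indep_centered : mutually_independent P Psi ->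
    (forall i, Psi i \in Lfun P 2%:E) -> (forall i, 'E_P[Psi i] = 0) ->
  secmom P Psi = diag_mx (\row_a fine 'V_P[Psi a]).
Proof.
move=> indepPsi Psi2 Psi_centered; have mPsi i := Lfun_measurable (Psi2 i).
apply/matrixP => a b; rewrite !mxE; case: eqP => [<-|ab].
  by rewrite mulr1n fine_variance_centered.
rewrite mulr0n expectation_mul_indep_centered //.
- apply: indep2_coord => //; apply: measurable_coord_sigma => /=.
  by apply/eqP => ba; apply: ab.
- by apply: Lfun_subset12; rewrite ?fin_num_measure.
- exact: Lfun2_mul_Lfun1.
Qed.

End lincomb.
End moments.

Local Notation sigma_coord Psi S := (g_sigma_algebraType (coord_rect Psi S)).

Lemma CHto_set1P p (E : rel 'I_p) (j k l : 'I_p) :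
    acyclic E -> ancestor E k j -> CHto E j k = finset.set1 l ->
  [/\ k != j, k != l, E k l & forall a, E k a -> a != l -> ~~ connect E a j].
Proof.
move=> acyclicE /andP[kj _] CH.
have : l \in CHto E j k by rewrite CH inE.
rewrite inE => /andP[Ekl _]; split=> // [|a Eka al].
  by apply: contraTneq Ekl => <-; apply/negP => /acyclicE; rewrite connect0.
have : a \notin CHto E j k by rewrite CH inE.
rewrite inE Eka /= negb_or => /andP[not_anc /negPf aj].
by apply: contra not_anc; rewrite /ancestor aj.
Qed.

Section sem_model.
Context d (T : measurableType d) (R : realType) (P : probability T R) (p : nat)
  (Psi : 'I_p -> T -> R) (E : rel 'I_p) (theta : 'I_p -> 'I_p -> R)
  (X : 'I_p -> T -> R) (f : R -> R) (j : 'I_p).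
Hypothesis indepPsi : mutually_independent P Psi.
Hypothesis Psi2 : forall i, Psi i \in Lfun P 2%:E.
Hypothesis Psi_centered : forall i, 'E_P[Psi i]%E = 0%E.
Hypothesis Psi_var_gt0 : forall i, 0 < fine ('V_P[Psi i])%E.
Hypothesis acyclicE : acyclic E.
Hypothesis X_sem :
  forall i w, X i w = Psi i w + \sum_(m < p | E m i) theta i m * X m w.
Hypothesis mf : measurable_fun [set: R] f.
Hypothesis XfX1 : forall i, (fun w => X i w * f (X j w)) \in Lfun P 1.

Local Notation A := (sem_inv E theta).
Local Notation L := (sem_mx E theta).
Local Notation gamma a := (fine 'E_P[fun w => (Psi a w * f (X j w))%R]%E).
Local Notation sigma2 a := (fine 'V_P[Psi a]%E).

Let mPsi i : measurable_fun setT (Psi i) := Lfun_measurable (Psi2 i).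

Let X_sem_col w i : (\col_i X i w) i 0 =
  (\col_i Psi i w) i 0 + \sum_(m < p | E m i) theta i m * (\col_i X i w) m 0.
Proof. by rewrite !mxE X_sem; under [in RHS]eq_bigr do rewrite mxE. Qed.

Lemma X_lincomb i w : X i w = \sum_m A i m * Psi m w.
Proof.
have /(congr1 (fun M : 'cV[R]_p => M i 0)) := sem_inv_mul acyclicE (X_sem_col w).
by rewrite !mxE => ->; apply: eq_bigr => m _; rewrite [_ m 0]mxE.
Qed.

Lemma Psi_lincomb a w : Psi a w = \sum_i L a i * X i w.
Proof.
have /(congr1 (fun M : 'cV[R]_p => M a 0)) := sem_mx_mul (X_sem_col w).
by rewrite !mxE => <-; apply: eq_bigr => i _; rewrite [_ i 0]mxE.
Qed.

Lemma Psi_fX_Lfun1 a : (fun w => Psi a w * f (X j w)) \in Lfun P 1.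
Proof.
rewrite (_ : (fun w => _) = fun w => \sum_i L a i * (X i w * f (X j w))).
  exact: Lfun_lincomb.
apply/funext => w; rewrite Psi_lincomb mulr_suml.
by apply: eq_bigr => i _; rewrite mulrA.
Qed.

Lemma beta_fj_sem k : beta_fj P X f j k 0 =
  gamma k / sigma2 k - \sum_(a | E k a) theta a k * gamma a / sigma2 a.
Proof.
rewrite /beta_fj (secmom_lincomb Psi2 X_lincomb).
rewrite (secmom_indep_centered indepPsi Psi2 Psi_centered).
rewrite (cross_moment_lincomb (Y := fun w => f (X j w)) X_lincomb Psi_fX_Lfun1).
rewrite (sem_beta theta acyclicE) => [|a]; last by rewrite mxE gt_eqF.
rewrite (sem_mx_beta_coord theta acyclicE) !mxE; congr (_ - _).
by apply: eq_bigr => a _; rewrite !mxE.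
Qed.

Lemma measurable_X_sigma (S : pred 'I_p) i :
    (forall m, ~~ S m -> A i m = 0) ->
  measurable_fun setT (X i : sigma_coord Psi S -> R).
Proof.
by move=> A0; rewrite (funext (X_lincomb i)); exact: measurable_lincomb_sigma.
Qed.

Lemma measurable_X i : measurable_fun setT (X i).
Proof. exact: (measurable_fun_sigma_coord mPsi (measurable_X_sigma (S := predT) _)). Qed.

Lemma gamma_eq0 a : ~~ connect E a j -> gamma a = 0.
Proof.
move=> not_aj; rewrite (expectation_mul_indep_centered (V := fun w => f (X j w))) //.
- exact: measurableT_comp mf (measurable_X j).
- apply: (indep2_coord indepPsi mPsi (Y := fun w => f (X j w))).
  apply: measurableT_comp mf _; apply: measurable_X_sigma => m /negPn /eqP ->.
  exact: (sem_inv_eq0 theta acyclicE).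
- by apply: Lfun_subset12; rewrite ?fin_num_measure.
- exact: Psi_fX_Lfun1.
Qed.

Section single_child.
Variables (k l : 'I_p).
Hypotheses (kl : k != l) (Akl : A j k = A j l * theta l k).
Hypothesis same_law_lk : same_law P (Psi l) (fun w => theta l k * Psi k w).

Local Notation th := (theta l k).

Let c m := if (m == k) || (m == l) then 0 else A j m.
Let W w := \sum_m c m * Psi m w.

Lemma X_j_split w : X j w = A j l * (Psi l w + th * Psi k w) + W w.
Proof.
have lk : l != k by rewrite eq_sym.
rewrite X_lincomb /W (bigD1 k) //= (bigD1 l) //= [in RHS](bigD1 k) //=.
rewrite [in RHS](bigD1 l) //=.
have -> : \sum_(m | (m != k) && (m != l)) c m * Psi m w =
    \sum_(m | (m != k) && (m != l)) A j m * Psi m w.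
  by apply: eq_bigr => m /andP[/negPf km /negPf lm]; rewrite /c km lm.
rewrite /c !eqxx orbT /= !mul0r !add0r Akl; ring.
Qed.

Let measurable_W_sigma i : (i == k) || (i == l) ->
  measurable_fun setT (W : sigma_coord Psi (predC1 i) -> R).
Proof.
by move=> ikl; apply: measurable_lincomb_sigma => m /negPn /eqP ->; rewrite /c ikl.
Qed.

(* [(Psi l, th Psi k, W)] and [(th Psi k, Psi l, W)] have the same law, since
   in both the three components are independent with the same marginals. *)
Lemma expectation_swap (h : R * (R * R) -> R) : measurable_fun setT h ->
    (fun w => h (Psi l w, (th * Psi k w, W w))) \in Lfun P 1 ->
    (fun w => h (th * Psi k w, (Psi l w, W w))) \in Lfun P 1 ->
  'E_P[(fun w => h (Psi l w, (th * Psi k w, W w)))%R]%E =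
  'E_P[(fun w => h (th * Psi k w, (Psi l w, W w)))%R]%E.
Proof.
move=> mh hl hk.
have mWk := measurable_W_sigma (predU1l (k == l) (erefl k)).
have mWl := measurable_W_sigma (predU1r l k (eqxx l)).
have mth : measurable_fun setT ( *%R th) := mulrl_measurable th.
have mthk : measurable_fun setT (fun w => th * Psi k w) := measurableT_comp mth (mPsi k).
have mW : measurable_fun setT W := measurable_fun_sigma_coord mPsi mWk.
have law_kl : eq_law P (fun w => th * Psi k w) (Psi l).
  by move=> B mB; rewrite same_law_lk.
have indep_lW := indep2_coord indepPsi mPsi mWl.
have indep_kW := indep2_compl mth (indep2_coord indepPsi mPsi mWk).
have law_pair := eq_law_pair mthk (mPsi l) mW mW indep_kW indep_lW law_kl
  (fun _ _ => erefl).
have indep_l : indep2 P (Psi l) (fun w => (th * Psi k w, W w)).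
  apply: indep2_coord => //; apply: measurable_fun_pair mWl.
  by apply: measurable_funM; [exact: measurable_cst|exact: measurable_coord_sigma].
have indep_k : indep2 P (fun w => th * Psi k w) (fun w => (Psi l w, W w)).
  apply: indep2_compl mth _; apply: indep2_coord => //.
  apply: measurable_fun_pair mWk.
  by apply: measurable_coord_sigma; rewrite /= eq_sym.
apply: (expectation_eq_law _ _ _ mh hl hk).
- exact: measurable_fun_pair (mPsi l) (measurable_fun_pair mthk mW).
- exact: measurable_fun_pair mthk (measurable_fun_pair (mPsi l) mW).
apply: eq_law_pair indep_l indep_k same_law_lk law_pair => //.
- exact: measurable_fun_pair mthk mW.
- exact: measurable_fun_pair (mPsi l) mW.
Qed.

Lemma gamma_swap : gamma l = th * gamma k.
Proof.
pose h (z : R * (R * R)) := z.1 * f (A j l * (z.1 + z.2.1) + z.2.2).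
have mh : measurable_fun setT h.
  apply: measurable_funM => //; apply: measurableT_comp mf _.
  apply: measurable_funD; last exact: measurableT_comp measurable_snd measurable_snd.
  apply: measurable_funM => //; apply: measurable_funD => //.
  exact: measurableT_comp measurable_fst measurable_snd.
have := expectation_swap mh.
rewrite (_ : (fun w => h _) = fun w => Psi l w * f (X j w)); last first.
  by apply/funext => w; rewrite /h /= X_j_split.
rewrite (_ : (fun w => h _) = fun w => th * (Psi k w * f (X j w))); last first.
  by apply/funext => w; rewrite /h /= X_j_split (addrC (Psi l w)) mulrA.
move=> /(_ (Psi_fX_Lfun1 l) (Lfun_mulrl _ _ (Psi_fX_Lfun1 k))) -> //.
by rewrite fine_expectation_mulrl ?Psi_fX_Lfun1.
Qed.

End single_child.
End sem_model.

Theorem proposition2 (d : measure_display) (T : measurableType d)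
  (R : realType) (P : probability T R) (p : nat)
  (Psi : 'I_p -> T -> R) (E : rel 'I_p) (theta : 'I_p -> 'I_p -> R)
  (X : 'I_p -> T -> R) (f : R -> R) (j k l : 'I_p) :
  mutually_independent P Psi ->
  (forall i, Psi i \in Lfun P 2%:E) ->
  (forall i, 'E_P[Psi i]%E = 0%E) ->
  (forall i, 0 < fine ('V_P[Psi i])%E) ->
  acyclic E ->
  (forall i w, X i w = Psi i w + \sum_(m < p | E m i) theta i m * X m w) ->
  measurable_fun [set: R] f ->
  (forall i, (fun w => X i w * f (X j w)) \in Lfun P 1) ->
  ancestor E k j ->
  CHto E j k = finset.set1 l ->
  same_law P (Psi l) (fun w => theta l k * Psi k w) ->
  beta_fj P X f j k ord0 = 0.
Proof.
move=> indepPsi Psi2 Psi_centered Psi_var_gt0 acyclicE X_sem mf XfX1 anc CH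
  same_law_lk.
have [kj kl Ekl others] := CHto_set1P acyclicE anc CH.
have Akl := sem_inv_single_child theta acyclicE kj Ekl others.
have var_lk := fine_variance_same_law_scale (Psi2 l) (Psi2 k) (Psi_centered l)
  (Psi_centered k) same_law_lk.
have th_neq0 : theta l k != 0.
  by apply: contraTneq (Psi_var_gt0 l) => th0; rewrite var_lk th0 expr2 !mul0r ltxx.
rewrite (beta_fj_sem indepPsi Psi2 Psi_centered Psi_var_gt0 acyclicE X_sem XfX1).
rewrite (bigD1 l) //= big1 ?addr0 => [|a /andP[Eka al]]; last first.
  rewrite (gamma_eq0 indepPsi Psi2 Psi_centered acyclicE X_sem mf XfX1) ?others //.
  by rewrite mulr0 mul0r.
rewrite (gamma_swap indepPsi Psi2 acyclicE X_sem mf XfX1 kl Akl same_law_lk).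
by rewrite var_lk; field; rewrite th_neq0 gt_eqF.
Qed.
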